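(* Let $S$ be a Hausdorff semitopological semigroup which is an orthogonal sum $S=\sum_{i\in\mathscr I}B^0_{\lambda_i}(S_i)$ of topological Brandt $\lambda_i^0$-extensions of semitopological monoids $S_i$ with zeros. Then for every $i\in\mathscr I$, all $\alpha_i,\beta_i\in\lambda_i$ and every non-zero element $(\alpha_i,g_i,\beta_i)\in (S_i)_{\alpha_i,\beta_i}$ there exists an open neighbourhood $U$ of $(\alpha_i,g_i,\beta_i)$ in $S$ with $U\subseteq (S_i)^*_{\alpha_i,\beta_i}$. Consequently every set $(S_i)^*_{\alpha_i,\beta_i}$ is open in $S$.
   Context: All topological spaces are Hausdorff. A semitopological semigroup is a Hausdorff space with a separately continuous associative operation. For a semigroup $T$ with zero $0_T$ and a cardinal $\lambda\ge1$, the Brandt $\lambda^0$-extension $B^0_\lambda(T)$ is the set $(\lambda\times (T\setminus\{0_T\})\times\lambda)\cup\{0\}$ with multiplication $(\alpha,a,\beta)(\gamma,b,\delta)=(\alpha,ab,\delta)$ if $\beta=\gamma$ and $ab\ne0_T$, and $=0$ otherwise, with $0$ a zero. For $A\subseteq T$ and $\alpha,\beta\in\lambda$, $A_{\alpha,\beta}=\{(\alpha,s,\beta):s\in A\setminus\{0_T\}\}\cup\{0\}$ if $0_T\in A$, and $A_{\alpha,\beta}=\{(\alpha,s,\beta):s\in A\}$ otherwise; for a subset $B$ of a semigroup with zero, $B^*=B\setminus\{0\}$. If $T$ is a semitopological monoid with zero, a topological Brandt $\lambda^0$-extension of $T$ is $B^0_\lambda(T)$ with a topology making it a semitopological semigroup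 such that for some $\alpha\in\lambda$ the map $s\mapsto(\alpha,s,\alpha)$ ($0_T\mapsto 0$) is a homeomorphism of $T$ onto the subspace $T_{\alpha,\alpha}$. The orthogonal sum $\sum_{\iota}T_\iota$ of a disjoint family of semigroups $T_\iota$ with zeros is the set $\{0\}\cup\bigcup_\iota T_\iota^*$ where $st$ is the product in $T_\iota$ if $s,t\in T_\iota^*$ and this product is non-zero, and $st=0$ otherwise. *)

From Stdlib Require Import Classical ClassicalEpsilon.
Set Implicit Arguments.

Record topology (X : Type) := Topology {
  open : (X -> Prop) -> Prop;
  open_full : open (fun _ => True);
  open_inter : forall U V, open U -> open V -> open (fun x => U x /\ V x);
  open_union : forall F : (X -> Prop) -> Prop,
      (forall U, F U -> open U) -> open (fun x => exists U, F U /\ U x)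
}.
Arguments open {X} t U.

Definition hausdorff {X} (t : topology X) : Prop :=
  forall x y : X, x <> y -> exists U V, open t U /\ open t V /\ U x /\ V y /\
     (forall z, U z -> V z -> False).

Definition continuous {X Y} (tX : topology X) (tY : topology Y) (f : X -> Y) :=
  forall V, open tY V -> open tX (fun x => V (f x)).

Definition embedding {X Y} (tX : topology X) (tY : topology Y) (f : X -> Y) :=
  (forall x x', f x = f x' -> x = x') /\ continuous tX tY f /\
  (forall U, open tX U -> exists V, open tY V /\ forall x, U x <-> V (f x)).

Definition semitopological_semigroup {X} (t : topology X) (op : X -> X -> X) :=
  hausdorff t /\ (forall a b c, op a (op b c) = op (op a b) c) /\
  (forall a, continuous t t (fun x => op a x)) /\
  (forall a, continuous t t (fun x => op x a)).

Record STMonoidZero := {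
  carrier :> Type;
  mulm : carrier -> carrier -> carrier;
  zerom : carrier;
  onem : carrier;
  topm : topology carrier;
  mulm_assoc : forall a b c, mulm a (mulm b c) = mulm (mulm a b) c;
  mulm_1x : forall a, mulm onem a = a;
  mulm_x1 : forall a, mulm a onem = a;
  mulm_0x : forall a, mulm zerom a = zerom;
  mulm_x0 : forall a, mulm a zerom = zerom;
  mulm_semitop : semitopological_semigroup topm mulm
}.

(** Carrier: [None] is the common zero, [Some (existT i p)] is the non-zero
    element (alpha, s, beta) of B^0_{L i}(M i), with s <> 0 in M i. *)
Section OSum.
Variables (I : Type) (L : I -> Type) (M : I -> STMonoidZero).

Record NZ (i : I) := MkNZ {
  nz_a : L i; nz_s : M i; nz_b : L i; nz_ne : nz_s <> zerom (M i) }.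

Definition OSum := option {i : I & NZ i}.

Definition osum_mul (x y : OSum) : OSum :=
  match x, y with
  | Some (existT _ i p), Some (existT _ j q) =>
    match excluded_middle_informative (i = j) with
    | left e =>
      let q' : NZ i := eq_rect_r NZ q e in
      match excluded_middle_informative (nz_b p = nz_a q') with
      | left _ =>
        match excluded_middle_informative
                (mulm (M i) (nz_s p) (nz_s q') = zerom (M i)) with
        | left _ => None
        | right h => Some (existT NZ i (@MkNZ i (nz_a p) _ (nz_b q') h))
        end
      | right _ => None
      end
    | right _ => None
    end
  | _, _ => None
  end.

Definition brandt_diag (i : I) (alpha : L i) (s : M i) : OSum :=
  match excluded_middle_informative (s = zerom (M i)) with
  | left _ => None
  | right h => Some (existT NZ i (@MkNZ i alpha s alpha h))
  end.

Definition brandt_elt (i : I) (alpha beta : L i) (g : M i)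
  (hg : g <> zerom (M i)) : OSum :=
  Some (existT NZ i (@MkNZ i alpha g beta hg)).

Definition cell_star (i : I) (alpha beta : L i) (y : OSum) : Prop :=
  exists p : NZ i, y = Some (existT NZ i p) /\ nz_a p = alpha /\ nz_b p = beta.

End OSum.

(** Let x = (alpha, g, beta) with g <> 0, and put e_alpha = (alpha, 1, alpha),
    e_beta = (beta, 1, beta).  The two-sided translation y |-> e_alpha y e_beta
    is continuous (separate continuity, applied twice) and fixes x.  By the
    Hausdorff property some open U contains x but not the zero; its preimage
    under the translation is an open neighbourhood of x, and every y in it
    satisfies e_alpha y e_beta <> 0, which by the Brandt multiplication rule
    forces y to lie in (S_i)^*_{alpha,beta}.  The cell is then open as the
    union of these neighbourhoods. *)

From Stdlib Require Import Classical ClassicalEpsilon FunctionalExtensionality PropExtensionality Eqdep.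
Set Implicit Arguments.

Lemma open_of_local_nbhds (X : Type) (t : topology X) (A : X -> Prop) :
  (forall x, A x -> exists U, open t U /\ U x /\ forall y, U y -> A y) ->
  open t A.
Proof.
  intro Hloc.
  set (F := fun U : X -> Prop => open t U /\ forall y, U y -> A y).
  assert (HA : (fun x => exists U, F U /\ U x) = A).
  { apply functional_extensionality; intro x.
    apply propositional_extensionality; split.
    - intros [U [[_ UA] Ux]]. exact (UA x Ux).
    - intro Ax. destruct (Hloc x Ax) as [U [oU [Ux UA]]].
      exists U. repeat split; assumption. }
  rewrite <- HA. apply open_union. intros U [oU _]. exact oU.
Qed.

Lemma sandwich_continuous (X : Type) (t : topology X) (op : X -> X -> X)
  (HS : semitopological_semigroup t op) (a b : X) :
  continuous t t (fun y => op (op a y) b).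
Proof.
  destruct HS as [_ [_ [Hl Hr]]].
  intros V oV. exact (Hl a (fun z => V (op z b)) (Hr b V oV)).
Qed.

Lemma hausdorff_nbhd_avoiding (X : Type) (t : topology X) (Ht : hausdorff t)
  (x z : X) : x <> z -> exists U, open t U /\ U x /\ ~ U z.
Proof.
  intro xz. destruct (Ht x z xz) as [U [V [oU [_ [Ux [Vz dUV]]]]]].
  exists U. split; [exact oU|]. split; [exact Ux|]. intro Uz. exact (dUV z Uz Vz).
Qed.

(** A monoid with zero having a non-zero element satisfies 1 <> 0; this is
    what makes e_gamma = (gamma, 1, gamma) a genuine (non-zero) element. *)
Lemma one_neq_zero (T : STMonoidZero) (g : T) : g <> zerom T -> onem T <> zerom T.
Proof.
  intros hg e. apply hg. rewrite <- (mulm_1x T g), e. apply mulm_0x.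
Qed.

Section BrandtProducts.
Variables (I : Type) (L : I -> Type) (M : I -> STMonoidZero).

Lemma MkNZ_eq (i : I) (a b : L i) (s s' : M i)
  (h : s <> zerom (M i)) (h' : s' <> zerom (M i)) :
  s = s' -> MkNZ L M i a b h = MkNZ L M i a b h'.
Proof. intros ->. f_equal. apply proof_irrelevance. Qed.

Lemma osum_mul_same (i : I) (p q : NZ L M i) :
  osum_mul (Some (existT (NZ L M) i p)) (Some (existT (NZ L M) i q)) =
  match excluded_middle_informative (nz_b p = nz_a q) with
  | left _ =>
    match excluded_middle_informative
            (mulm (M i) (nz_s p) (nz_s q) = zerom (M i)) with
    | left _ => None
    | right h => Some (existT (NZ L M) i (MkNZ L M i (nz_a p) (nz_b q) h))
    end
  | right _ => None
  end.
Proof.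
  unfold osum_mul.
  destruct (excluded_middle_informative (i = i)) as [e|n]; [|contradiction].
  rewrite (proof_irrelevance _ e eq_refl). reflexivity.
Qed.

Lemma osum_mul_match (i : I) (p q : NZ L M i) (e : nz_b p = nz_a q)
  (h : mulm (M i) (nz_s p) (nz_s q) <> zerom (M i)) :
  osum_mul (Some (existT (NZ L M) i p)) (Some (existT (NZ L M) i q)) =
  Some (existT (NZ L M) i (MkNZ L M i (nz_a p) (nz_b q) h)).
Proof.
  rewrite osum_mul_same.
  destruct (excluded_middle_informative (nz_b p = nz_a q)); [|contradiction].
  destruct (excluded_middle_informative
              (mulm (M i) (nz_s p) (nz_s q) = zerom (M i))); [contradiction|].
  do 3 f_equal. apply proof_irrelevance.
Qed.

Lemma osum_mul_nonzero {x y : OSum L M} : osum_mul x y <> None ->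
  exists i (p q : NZ L M i),
    x = Some (existT _ i p) /\ y = Some (existT _ i q) /\ nz_b p = nz_a q /\
    exists h : mulm (M i) (nz_s p) (nz_s q) <> zerom (M i),
      osum_mul x y = Some (existT (NZ L M) i (MkNZ L M i (nz_a p) (nz_b q) h)).
Proof.
  intro H.
  destruct x as [[i p]|]; [|contradiction].
  destruct y as [[j q]|]; [|contradiction].
  destruct (classic (i = j)) as [<-|ij].
  - exists i, p, q. split; [reflexivity|]. split; [reflexivity|].
    rewrite osum_mul_same in H |- *.
    destruct (excluded_middle_informative (nz_b p = nz_a q)) as [e|]; [|contradiction].
    destruct (excluded_middle_informative
                (mulm (M i) (nz_s p) (nz_s q) = zerom (M i))) as [|h]; [contradiction|].
    split; [exact e|]. exists h. reflexivity.
  - exfalso. apply H. unfold osum_mul.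
    destruct (excluded_middle_informative (i = j)); [contradiction|reflexivity].
Qed.

Lemma sandwich_fixes (i : I) (alpha beta : L i) (g : M i) (hg : g <> zerom (M i))
  (h1 : onem (M i) <> zerom (M i)) :
  osum_mul (osum_mul (brandt_elt L M i alpha alpha h1) (brandt_elt L M i alpha beta hg))
           (brandt_elt L M i beta beta h1) = brandt_elt L M i alpha beta hg.
Proof.
  assert (h2 : mulm (M i) (onem (M i)) g <> zerom (M i))
    by (rewrite mulm_1x; exact hg).
  assert (h3 : mulm (M i) (mulm (M i) (onem (M i)) g) (onem (M i)) <> zerom (M i))
    by (rewrite mulm_x1; exact h2).
  unfold brandt_elt.
  rewrite (osum_mul_match (MkNZ L M i alpha alpha h1) (MkNZ L M i alpha beta hg) eq_refl h2).
  cbn [nz_a nz_b nz_s].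
  rewrite (osum_mul_match (MkNZ L M i alpha beta h2) (MkNZ L M i beta beta h1) eq_refl h3).
  simpl. do 3 f_equal. apply MkNZ_eq. rewrite mulm_x1, mulm_1x. reflexivity.
Qed.

Lemma sandwich_nonzero_in_cell (i : I) (alpha beta : L i)
  (h1 : onem (M i) <> zerom (M i)) (y : OSum L M) :
  osum_mul (osum_mul (brandt_elt L M i alpha alpha h1) y)
           (brandt_elt L M i beta beta h1) <> None ->
  cell_star i alpha beta y.
Proof.
  intro Hn.
  destruct (osum_mul_nonzero Hn) as [i1 [p1 [q1 [E1 [E2 [E3 _]]]]]].
  assert (Hn2 : osum_mul (brandt_elt L M i alpha alpha h1) y <> None)
    by (rewrite E1; discriminate).
  destruct (osum_mul_nonzero Hn2) as [i0 [p0 [q0 [F1 [F2 [F3 [h F4]]]]]]].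
  unfold brandt_elt in F1. injection F1 as <- F1. apply inj_pair2 in F1. subst p0.
  rewrite F4 in E1. injection E1 as <- E1. apply inj_pair2 in E1. subst p1.
  unfold brandt_elt in E2. injection E2 as E2. apply inj_pair2 in E2. subst q1.
  exists q0. simpl in *. repeat split; [exact F2|symmetry; exact F3|exact E3].
Qed.

End BrandtProducts.

(** Each non-zero element (alpha, g, beta) has an open neighbourhood inside
    the cell (M i)^*_{alpha,beta}: the preimage, under the sandwich by
    e_alpha and e_beta, of an open neighbourhood of it that misses zero. *)
Lemma cell_nbhd (I : Type) (L : I -> Type) (M : I -> STMonoidZero)
  (tau : topology (OSum L M)) (HS : semitopological_semigroup tau (@osum_mul I L M))
  (i : I) (alpha beta : L i) (g : M i) (hg : g <> zerom (M i)) :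
  exists U : OSum L M -> Prop,
    open tau U /\ U (brandt_elt L M i alpha beta hg) /\
    (forall y, U y -> cell_star i alpha beta y).
Proof.
  pose proof (@one_neq_zero (M i) g hg) as h1.
  set (sandwich := fun y => osum_mul (osum_mul (brandt_elt L M i alpha alpha h1) y)
                                     (brandt_elt L M i beta beta h1)).
  destruct (hausdorff_nbhd_avoiding (proj1 HS) (x := brandt_elt L M i alpha beta hg)
              (z := None) ltac:(discriminate)) as [U [oU [Ux U0]]].
  exists (fun y => U (sandwich y)). split; [|split].
  - exact (sandwich_continuous HS _ _ U oU).
  - unfold sandwich. rewrite sandwich_fixes. exact Ux.
  - intros y Uy. apply (sandwich_nonzero_in_cell _ _ _ h1).
    intro e. apply U0. unfold sandwich in Uy. rewrite <- e. exact Uy.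
Qed.

Theorem proposition2p2 (I : Type) (L : I -> Type) (M : I -> STMonoidZero)
  (tau : topology (@OSum I L M))
  (HS : semitopological_semigroup tau (@osum_mul I L M))
  (Hbrandt : forall i : I, exists alpha : L i,
      embedding (topm (M i)) tau (@brandt_diag I L M i alpha)) :
  (forall (i : I) (alpha beta : L i) (g : M i) (hg : g <> zerom (M i)),
     exists U : @OSum I L M -> Prop,
       open tau U /\ U (@brandt_elt I L M i alpha beta g hg) /\
       (forall y, U y -> @cell_star I L M i alpha beta y)) /\
  (forall (i : I) (alpha beta : L i), open tau (@cell_star I L M i alpha beta)).
Proof.
  split.
  - exact (cell_nbhd HS).
  - intros i alpha beta. apply open_of_local_nbhds.
    intros y [[a s b hs] [-> [<- <-]]]. exact (cell_nbhd HS i a b hs).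
Qed.
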